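(* Let $\mathcal S$ be a nonempty self-dual, nested, chain-vanishing collection of nonempty subsets of a set $X$. Then $\sim_{\mathcal S}$ is an equivalence relation on $\mathcal S$ and the graph $\mathcal T_{\mathcal S}$ is a tree (connected, acyclic, without loops or multiple edges).
   Context: Fix a nonempty set $X$; $A^c:=X\setminus A$, $A^1:=A$, $A^{-1}:=A^c$. Sets $A,B\subseteq X$ are orthogonal, $A\perp B$, if $A\cap B=\emptyset$ and $A\ne B^c$. For a collection $\mathcal S$ of nonempty subsets of $X$ and $A,B\in\mathcal S$, $B$ is $\mathcal S$-maximally orthogonal to $A$ if $B\perp A$ and there is no $C\in\mathcal S$ with $C\perp A$ and $C\supsetneq B$; $[A]_{\mathcal S}:=\{A\}\cup\{B\in\mathcal S: B \text{ is } \mathcal S\text{-maximally orthogonal to } A\}$; $A\sim_{\mathcal S}B$ iff $A\in[B]_{\mathcal S}$. A chain is a sequence $(A_n)_{n\in\mathbb N}$ strictly increasing or strictly decreasing under inclusion; a decreasing (resp. increasing) chain is $\mathcal S$-vanishing if there is no $B\in\mathcal S$ with $B\subseteq A_n$ (resp. $B\cap A_n=\emptyset$) for all $n$; $\mathcal S$ is chain-vanishing if every chain of members of $\mathcal S$ is $\mathcal S$-vanishing. Sets $A,B$ are nested if some corner $A^i\cap B^j$ ($i,j\in\{-1,1\}$) is empty; $\mathcal S$ is nested if any two members are nested. $\mathcal S$ is self-dual if $A\in\mathcal S\Rightarrow A^c\in\mathcal S$. $\mathcal T_{\mathcal S}$ is the undirected graph with vertex set $\mathcal S/{\sim_{\mathcal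 S}}$ having an edge between $[A]_{\mathcal S}$ and $[A^c]_{\mathcal S}$ for every $A$ with $A,A^c\in\mathcal S$. *)

From Stdlib Require Import List Relations.
Import ListNotations.
Set Implicit Arguments.

Section Defs.
Variable X : Type.
Definition set := X -> Prop.
Definition coll := set -> Prop.

Definition compl (A : set) : set := fun x => ~ A x.
Definition subset (A B : set) : Prop := forall x, A x -> B x.
Definition psubset (A B : set) : Prop := subset A B /\ A <> B.
Definition disjoint (A B : set) : Prop := forall x, ~ (A x /\ B x).

(* A^1 = A, A^{-1} = A^c ; true encodes 1, false encodes -1 *)
Definition corner (i : bool) (A : set) : set := if i then A else compl A.

Definition orth (A B : set) : Prop := disjoint A B /\ A <> compl B.

Definition maxorth (S : coll) (A B : set) : Prop :=
  orth B A /\ ~ (exists C, S C /\ orth C A /\ psubset B C).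

Definition cls (S : coll) (A : set) : coll :=
  fun B => B = A \/ (S B /\ maxorth S A B).

Definition sim (S : coll) (A B : set) : Prop := cls S B A.

Definition nested_pair (A B : set) : Prop :=
  exists i j : bool, disjoint (corner i A) (corner j B).
Definition nested (S : coll) : Prop :=
  forall A B, S A -> S B -> nested_pair A B.
Definition self_dual (S : coll) : Prop := forall A, S A -> S (compl A).
Definition nonempty_members (S : coll) : Prop := forall A, S A -> exists x, A x.

Definition incr_chain (f : nat -> set) : Prop := forall n, psubset (f n) (f (S n)).
Definition decr_chain (f : nat -> set) : Prop := forall n, psubset (f (S n)) (f n).

Definition vanishing_decr (S : coll) (f : nat -> set) : Prop :=
  ~ (exists B, S B /\ forall n, subset B (f n)).
Definition vanishing_incr (S : coll) (f : nat -> set) : Prop :=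
  ~ (exists B, S B /\ forall n, disjoint B (f n)).

Definition chain_vanishing (S : coll) : Prop :=
  forall f : nat -> set, (forall n, S (f n)) ->
    (incr_chain f -> vanishing_incr S f) /\ (decr_chain f -> vanishing_decr S f).

Definition equiv_on (S : coll) (R : set -> set -> Prop) : Prop :=
  (forall A, S A -> R A A) /\
  (forall A B, S A -> S B -> R A B -> R B A) /\
  (forall A B C, S A -> S B -> S C -> R A B -> R B C -> R A C).

(* The graph T_S: vertices are the classes [A]_S (A ∈ S); for each A with
   A, A^c ∈ S there is an (undirected) edge {[A]_S, [A^c]_S}; the edges given
   by A and by A^c are the same edge. *)
Definition vertex (S : coll) (v : coll) : Prop := exists A, S A /\ v = cls S A.
Definition adj (S : coll) (v w : coll) : Prop :=
  exists A, S A /\ S (compl A) /\ v = cls S A /\ w = cls S (compl A).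

Definition no_loops (S : coll) : Prop :=
  forall A, S A -> S (compl A) -> cls S A <> cls S (compl A).

Definition no_multi_edges (S : coll) : Prop :=
  forall A B, S A -> S (compl A) -> S B -> S (compl B) ->
    cls S A = cls S B -> cls S (compl A) = cls S (compl B) ->
    A = B \/ A = compl B.

Definition connected (S : coll) : Prop :=
  forall v w, vertex S v -> vertex S w -> clos_refl_trans _ (adj S) v w.

Fixpoint adj_path (S : coll) (l : list coll) : Prop :=
  match l with
  | v :: ((w :: _) as t) => adj S v w /\ adj_path S t
  | _ => True
  end.

(* no cycle v0 - v1 - ... - v_{n-1} - v0 with n >= 3 distinct vertices
   (cycles of length 1 and 2 are excluded by no_loops / no_multi_edges) *)
Definition acyclic (S : coll) : Prop :=
  ~ (exists (l : list coll) (v0 vl : coll),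
        3 <= length l /\ NoDup l /\ (forall v, In v l -> vertex S v) /\
        adj_path S l /\ hd_error l = Some v0 /\ last l v0 = vl /\ adj S vl v0).

Definition is_tree (S : coll) : Prop :=
  connected S /\ acyclic S /\ no_loops S /\ no_multi_edges S.
End Defs.

(* Read B ⊥ A as B ⊊ A^c: then B is S-maximally orthogonal to A exactly when
   no member of S lies strictly between B and A^c.  Complementation reverses
   inclusions, so this relation is symmetric, and nestedness forces two
   distinct such B's to be disjoint, which yields transitivity.  An edge
   [A] — [A^c] followed by an edge [A^c] = [B] — [B^c] not leading back to
   [A] always has B ⊊ A, so a cycle in T_S would give A ⊊ A.  For
   connectivity, chain vanishing makes strict inclusion well founded on the
   members of S lying between two fixed members; if A ⊆ B and D ⊊ B is a
   maximal member of S above A, then [D] = [B^c] is adjacent to [B], so [B]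
   is reached from [A] by well-founded induction on B. *)
From Stdlib Require Import List Relations.
From Stdlib Require Import Classical FunctionalExtensionality PropExtensionality
  ClassicalEpsilon Lia.
Import ListNotations.
Set Implicit Arguments.

Lemma dependent_choice {T : Type} (P : T -> Prop) (R : T -> T -> Prop) (x0 : T) :
  P x0 -> (forall x, P x -> exists y, P y /\ R x y) ->
  exists f : nat -> T, (forall n, P (f n)) /\ forall n, R (f n) (f (S n)).
Proof.
  intros Hx0 Hstep.
  assert (next : forall x : {x | P x}, {y | P y /\ R (proj1_sig x) y}).
  { intros [x Hx]. apply constructive_indefinite_description. exact (Hstep x Hx). }
  set (succ x := exist P (proj1_sig (next x)) (proj1 (proj2_sig (next x)))).
  exists (fun n => proj1_sig (Nat.iter n succ (exist P x0 Hx0))). split.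
  - intro n. apply proj2_sig.
  - intro n. exact (proj2 (proj2_sig (next _))).
Qed.

Lemma last_nth {T : Type} (l : list T) (d : T) :
  l <> [] -> last l d = nth (length l - 1) l d.
Proof.
  induction l as [|a [|b t] IH]; intro Hl; [contradiction | reflexivity |].
  change (last (b :: t) d = nth (length t) (b :: t) d).
  rewrite IH by discriminate. f_equal. simpl. lia.
Qed.

Section Sets.
Variable X : Type.
Implicit Types A B C D : set X.

Lemma set_ext A B : (forall x, A x <-> B x) -> A = B.
Proof.
  intro H. apply functional_extensionality; intro x.
  apply propositional_extensionality; auto.
Qed.

Lemma compl_involutive A : compl (compl A) = A.
Proof. apply set_ext; intro x; unfold compl; split; [apply NNPP | tauto]. Qed.

Lemma compl_inj A B : compl A = compl B -> A = B.
Proof. intro H. rewrite <- (compl_involutive A), H. apply compl_involutive. Qed.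

Lemma subset_antisym A B : subset A B -> subset B A -> A = B.
Proof. intros; apply set_ext; split; auto. Qed.

Lemma psubset_compl A B : psubset A B -> psubset (compl B) (compl A).
Proof.
  intros [HAB HneAB]. split.
  - intros x HB HA. exact (HB (HAB x HA)).
  - intro E. apply HneAB, compl_inj; auto.
Qed.

Lemma orth_iff_psubset_compl A B : orth B A <-> psubset B (compl A).
Proof. unfold orth, psubset, disjoint, subset, compl. firstorder. Qed.

Lemma nested_pair_cases A B : nested_pair A B ->
  disjoint A B \/ subset A B \/ subset B A \/ subset (compl A) B.
Proof.
  intros [[|] [[|] H]]; simpl in H; unfold disjoint, subset, compl in *.
  - left; exact H.
  - right; left. intros x Ha; apply NNPP; intro Hb; apply (H x); auto.
  - right; right; left. intros x Hb; apply NNPP; intro Ha; apply (H x); auto.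
  - right; right; right. intros x Ha; apply NNPP; intro Hb; apply (H x); auto.
Qed.

End Sets.

Section ClassGraph.
Variable X : Type.
Variable S : coll X.
Implicit Types A B C D : set X.

Definition covered B D : Prop :=
  psubset B D /\ ~ (exists C, S C /\ psubset B C /\ psubset C D).

Lemma maxorth_iff_covered A B : maxorth S A B <-> covered B (compl A).
Proof.
  unfold maxorth, covered.
  split; intros [HBA Hmax]; split;
    try apply orth_iff_psubset_compl; auto;
    intros [C [HC [HCA HBC]]]; apply Hmax; exists C;
    rewrite orth_iff_psubset_compl in *; auto.
Qed.

Lemma cls_self A : cls S A A.
Proof. left; reflexivity. Qed.

Lemma sim_in_coll A B : S B -> sim S A B -> S A.
Proof. intros HB [-> | [HA _]]; assumption. Qed.

Lemma in_cls_compl_psubset A B : cls S (compl A) B -> B = compl A \/ psubset B A.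
Proof.
  intros [E | [_ [HBA _]]]; [left; exact E | right].
  rewrite orth_iff_psubset_compl, compl_involutive in HBA; exact HBA.
Qed.

Hypothesis HN : nonempty_members S.
Hypothesis HD : self_dual S.
Hypothesis Hn : nested S.

Lemma covered_compl B D : covered B D -> covered (compl D) (compl B).
Proof.
  intros [HBD Hmax]. split; [apply psubset_compl; exact HBD|].
  intros [C [HC [HDC HCB]]]. apply Hmax. exists (compl C).
  split; [apply HD; exact HC|].
  apply psubset_compl in HDC, HCB. rewrite compl_involutive in HDC, HCB. auto.
Qed.

Lemma maxorth_sym A B : maxorth S A B -> maxorth S B A.
Proof.
  rewrite !maxorth_iff_covered. intro H.
  apply covered_compl in H. rewrite compl_involutive in H. exact H.
Qed.

(* Neither contains the other, and their union misses the point outside D. *)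
Lemma covers_disjoint A C D : S A -> S C -> covered A D -> covered C D ->
  A <> C -> (exists x, ~ D x) -> disjoint A C.
Proof.
  intros HA HC [HAD HmaxA] [HCD HmaxC] HAC [x Hx].
  destruct (nested_pair_cases (Hn HA HC)) as [H | [H | [H | H]]].
  - exact H.
  - exfalso. apply HmaxA. exists C. split; [exact HC | split; [split; auto | exact HCD]].
  - exfalso. apply HmaxC. exists A.
    split; [exact HA | split; [split; [exact H | congruence] | exact HAD]].
  - exfalso. apply Hx. destruct (classic (A x)) as [Ha | Ha].
    + apply HAD, Ha.
    + apply HCD, H, Ha.
Qed.

Lemma maxorth_trans A B C : S A -> S B -> S C ->
  maxorth S B A -> maxorth S B C -> A <> C -> maxorth S C A.
Proof.
  rewrite !maxorth_iff_covered. intros HA HB HC HcovA HcovC HAC.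
  destruct (HN HB) as [b Hb]. destruct (HN HA) as [a Ha]. destruct (HN HC) as [c Hc].
  assert (HdisjAC : disjoint A C).
  { apply (covers_disjoint HA HC HcovA HcovC HAC). exists b. intro Hnb; exact (Hnb Hb). }
  destruct HcovA as [[HAB _] HmaxA], HcovC as [[HCB _] HmaxC].
  split.
  - split; [intros x Hx HCx; exact (HdisjAC x (conj Hx HCx))|].
    intro E. apply (HAB b); [rewrite E; intro HCb; exact (HCB b HCb Hb) | exact Hb].
  - (* a member D with A ⊊ D ⊊ C^c would break the maximality of A or of C below B^c *)
    intros [D [HSD [HAD HDC]]].
    destruct (nested_pair_cases (Hn HSD HB)) as [H | [H | [H | H]]].
    + apply HmaxA. exists D. split; [exact HSD | split; [exact HAD | split]].
      * intros x Hx HBx. exact (H x (conj Hx HBx)).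
      * intro E. apply (proj1 HDC c); [rewrite E; intro Hcb; exact (HCB c Hc Hcb) | exact Hc].
    + exact (HAB a Ha (H a (proj1 HAD a Ha))).
    + apply HmaxC. exists (compl D). split; [apply HD; exact HSD|].
      apply psubset_compl in HDC. rewrite compl_involutive in HDC.
      split; [exact HDC | split].
      * intros x HDx HBx. exact (HDx (H x HBx)).
      * intro E. apply compl_inj in E. subst D. exact (HAB a Ha (proj1 HAD a Ha)).
    + exact (HCB c Hc (H c (fun HDc => proj1 HDC c HDc Hc))).
Qed.

Lemma sim_equiv : equiv_on S (sim S).
Proof.
  split; [|split].
  - intros A _. apply cls_self.
  - intros A B _ HB [E | [_ HBA]]; [subst; apply cls_self|].
    right; split; [exact HB | apply maxorth_sym, HBA].
  - intros A B C HA HB HC [E | [_ HBA]] HCB; [subst; exact HCB|].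
    destruct HCB as [E | [_ HCB]]; [subst; right; split; assumption|].
    destruct (classic (A = C)) as [E | HAC]; [left; exact E|].
    right; split; [exact HA|].
    exact (maxorth_trans HA HB HC HBA (maxorth_sym HCB) HAC).
Qed.

Lemma cls_eq_of_sim A B : S A -> S B -> sim S A B -> cls S A = cls S B.
Proof.
  destruct sim_equiv as [_ [Hsym Htrans]]. intros HA HB HAB.
  apply set_ext; intro C. change (sim S C A <-> sim S C B).
  split; intro HC.
  - exact (Htrans _ _ _ (sim_in_coll HA HC) HA HB HC HAB).
  - exact (Htrans _ _ _ (sim_in_coll HB HC) HB HA HC (Hsym _ _ HA HB HAB)).
Qed.

Lemma adj_cls_compl A : S A -> adj S (cls S (compl A)) (cls S A).
Proof.
  intro HA. exists (compl A). rewrite compl_involutive. auto.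
Qed.

Hypothesis Hc : chain_vanishing S.

Lemma exists_minimal A (P : set X -> Prop) B0 : S A ->
  (forall B, P B -> S B /\ subset A B) -> P B0 ->
  exists D, P D /\ forall C, P C -> ~ psubset C D.
Proof.
  intros HA HP HB0. apply NNPP; intro Hno.
  destruct (@dependent_choice _ P (fun B C => psubset C B) B0 HB0)
    as [f [Hf Hdecr]].
  { intros B HB. apply NNPP; intro Hnone. apply Hno. exists B.
    split; [exact HB|]. intros C HC HCB. apply Hnone. exists C; auto. }
  apply (proj2 (Hc f (fun n => proj1 (HP _ (Hf n)))) Hdecr).
  exists A. split; [exact HA | intro n; exact (proj2 (HP _ (Hf n)))].
Qed.

Lemma exists_maximal E (P : set X -> Prop) B0 : S E ->
  (forall B, P B -> S B /\ disjoint E B) -> P B0 ->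
  exists D, P D /\ forall C, P C -> ~ psubset D C.
Proof.
  intros HE HP HB0. apply NNPP; intro Hno.
  destruct (@dependent_choice _ P (fun B C => psubset B C) B0 HB0)
    as [f [Hf Hincr]].
  { intros B HB. apply NNPP; intro Hnone. apply Hno. exists B.
    split; [exact HB|]. intros C HC HBC. apply Hnone. exists C; auto. }
  apply (proj1 (Hc f (fun n => proj1 (HP _ (Hf n)))) Hincr).
  exists E. split; [exact HE | intro n; exact (proj2 (HP _ (Hf n)))].
Qed.

Lemma exists_lower_cover A B : S A -> S B -> psubset A B ->
  exists D, S D /\ subset A D /\ covered D B.
Proof.
  intros HA HB HAB.
  destruct (@exists_maximal (compl B) (fun C => S C /\ subset A C /\ psubset C B) A)
    as [D [[HSD [HAD HDB]] Hmax]].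
  - apply HD, HB.
  - intros C [HC [_ [HCB _]]]. split; [exact HC|].
    intros x [HBx HCx]. exact (HBx (HCB x HCx)).
  - split; [exact HA | split; [intros x Hx; exact Hx | exact HAB]].
  - exists D. split; [exact HSD | split; [exact HAD | split; [exact HDB|]]].
    intros [C [HC [HDC HCB]]]. apply (Hmax C); [|exact HDC].
    split; [exact HC | split; [intros x Hx; exact (proj1 HDC x (HAD x Hx)) | exact HCB]].
Qed.

Notation reach := (clos_refl_trans _ (adj S)).

Lemma reach_of_subset A B : S A -> S B -> subset A B -> reach (cls S A) (cls S B).
Proof.
  intros HA HB HAB. apply NNPP; intro Hnot.
  destruct (@exists_minimal A (fun B => S B /\ subset A B /\ ~ reach (cls S A) (cls S B)) B)
    as [D [[HSD [HAD HnD]] Hmin]]; auto.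
  { intros C [HC [HAC _]]; auto. }
  assert (HneAD : A <> D) by (intros ->; apply HnD, rt_refl).
  destruct (exists_lower_cover HA HSD (conj HAD HneAD)) as [D' [HSD' [HAD' Hcov]]].
  assert (Hreach' : reach (cls S A) (cls S D')).
  { apply NNPP; intro Hn'. apply (Hmin D'); [auto | apply Hcov]. }
  assert (Hcls : cls S D' = cls S (compl D)).
  { apply cls_eq_of_sim; [exact HSD' | apply HD, HSD |].
    right; split; [exact HSD'|]. apply maxorth_iff_covered.
    rewrite compl_involutive; exact Hcov. }
  apply HnD. apply rt_trans with (cls S D'); [exact Hreach'|].
  rewrite Hcls. apply rt_step, adj_cls_compl, HSD.
Qed.

Lemma cls_graph_connected : connected S.
Proof.
  intros v w [A [HA ->]] [B [HB ->]].
  assert (HAc : S (compl A)) by (apply HD, HA).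
  assert (HBc : S (compl B)) by (apply HD, HB).
  assert (HadjA : adj S (cls S A) (cls S (compl A))) by (exists A; auto).
  destruct (nested_pair_cases (Hn HA HB)) as [H | [H | [H | H]]].
  - apply rt_trans with (cls S (compl B)); [|apply rt_step, adj_cls_compl, HB].
    apply reach_of_subset; [exact HA | exact HBc |].
    intros x Hx HBx. exact (H x (conj Hx HBx)).
  - apply reach_of_subset; assumption.
  - apply rt_trans with (cls S (compl A)); [apply rt_step, HadjA|].
    apply rt_trans with (cls S (compl B)); [|apply rt_step, adj_cls_compl, HB].
    apply reach_of_subset; [exact HAc | exact HBc |].
    intros x HAx HBx. exact (HAx (H x HBx)).
  - apply rt_trans with (cls S (compl A)); [apply rt_step, HadjA|].
    apply reach_of_subset; assumption.
Qed.

Lemma edge_step_psubset A B :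
  cls S (compl A) = cls S B -> cls S A <> cls S (compl B) -> psubset B A.
Proof.
  intros HAB Hback. assert (HB : cls S (compl A) B) by (rewrite HAB; apply cls_self).
  destruct (in_cls_compl_psubset HB) as [-> | HBA]; [|exact HBA].
  rewrite compl_involutive in Hback. contradiction.
Qed.

Lemma cls_neq_cls_compl A : S A -> cls S A <> cls S (compl A).
Proof.
  intros HA E. assert (HAc : cls S (compl A) A) by (rewrite <- E; apply cls_self).
  destruct (HN HA) as [a Ha].
  destruct (in_cls_compl_psubset HAc) as [E' | [_ HneAA]].
  - assert (Ha' := Ha). rewrite E' in Ha'. exact (Ha' Ha).
  - exact (HneAA eq_refl).
Qed.

Lemma edge_unique A B : cls S A = cls S B -> cls S (compl A) = cls S (compl B) ->
  A = B \/ A = compl B.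
Proof.
  intros E Ec.
  assert (HB : cls S (compl (compl A)) B)
    by (rewrite compl_involutive, E; apply cls_self).
  assert (HBc : cls S (compl A) (compl B)) by (rewrite Ec; apply cls_self).
  destruct (in_cls_compl_psubset HB) as [HBA | [HBA _]].
  { left. rewrite HBA. symmetry. apply compl_involutive. }
  destruct (in_cls_compl_psubset HBc) as [HBA' | [HBA' _]].
  { left. symmetry. apply compl_inj, HBA'. }
  right. apply subset_antisym; [|exact HBA'].
  intros x HAx HBx. exact (HBA x HBx HAx).
Qed.

Lemma closed_walk_impossible (w : nat -> coll X) n : 3 <= n ->
  (forall i j, i < n -> j < n -> w i = w j -> i = j) ->
  (forall i, i + 1 < n -> adj S (w i) (w (i + 1))) ->
  adj S (w (n - 1)) (w 0) -> False.
Proof.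
  intros Hn3 Hinj Hwalk Hclose.
  destruct (Hwalk 0 ltac:(lia)) as [E0 [_ [_ [HE0 HE0c]]]].
  assert (Hshrink : forall k, k + 1 < n ->
    exists G, w k = cls S G /\ w (k + 1) = cls S (compl G) /\ subset G E0).
  { induction k as [|k IH]; intro Hk.
    - exists E0. split; [exact HE0 | split; [exact HE0c | intros x Hx; exact Hx]].
    - destruct IH as [G [HG [HGc HGE]]]; [lia|].
      destruct (Hwalk (k + 1) ltac:(lia)) as [G' [_ [_ [HG' HG'c]]]].
      replace (Datatypes.S k) with (k + 1) by lia.
      exists G'. split; [exact HG' | split; [exact HG'c|]].
      assert (Hstep : psubset G' G).
      { apply edge_step_psubset; [congruence|].
        rewrite <- HG, <- HG'c. intro E. apply Hinj in E; lia. }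
      intros x Hx. exact (HGE x (proj1 Hstep x Hx)). }
  destruct (Hshrink (n - 2) ltac:(lia)) as [G [HG [HGc HGE]]].
  replace (n - 2 + 1) with (n - 1) in HGc by lia.
  destruct Hclose as [Ec [_ [_ [HEc HEcc]]]].
  assert (HEcG : psubset Ec G).
  { apply edge_step_psubset; [congruence|].
    rewrite <- HG, <- HEcc. intro E. apply Hinj in E; lia. }
  assert (HE0Ec : psubset E0 Ec).
  { apply edge_step_psubset; [congruence|].
    rewrite <- HEc, <- HE0c. intro E. apply Hinj in E; lia. }
  apply (proj2 HE0Ec), subset_antisym; [apply HE0Ec|].
  intros x Hx. exact (HGE x (proj1 HEcG x Hx)).
Qed.

Lemma adj_path_nth (l : list (coll X)) d : adj_path S l ->
  forall i, i + 1 < length l -> adj S (nth i l d) (nth (i + 1) l d).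
Proof.
  induction l as [|v [|w t] IH]; intros Hp i Hi; simpl in Hi; try lia.
  destruct Hp as [Hvw Hp]. destruct i as [|i]; [exact Hvw|].
  apply (IH Hp i). simpl; lia.
Qed.

Lemma cls_graph_acyclic : acyclic S.
Proof.
  intros [l [v0 [vl [Hlen [Hnd [_ [Hp [Hhd [Hlast Hclose]]]]]]]]].
  apply (@closed_walk_impossible (fun i => nth i l v0) (length l) Hlen).
  - intros i j Hi Hj. apply NoDup_nth; assumption.
  - apply adj_path_nth, Hp.
  - rewrite <- last_nth by (intros ->; simpl in Hlen; lia).
    destruct l as [|v l]; [discriminate|]. injection Hhd as ->.
    rewrite Hlast. exact Hclose.
Qed.

End ClassGraph.

Theorem mainTheorem5 (X : Type) (S : coll X) :
  (exists A, S A) ->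
  nonempty_members S ->
  self_dual S ->
  nested S ->
  chain_vanishing S ->
  equiv_on S (sim S) /\ is_tree S.
Proof.
  intros _ HN HD Hn Hc. split; [exact (sim_equiv HN HD Hn)|].
  split; [exact (cls_graph_connected HN HD Hn Hc)|].
  split; [apply cls_graph_acyclic|].
  split.
  - intros A HA _. exact (cls_neq_cls_compl HN HA).
  - intros A B _ _ _ _. apply edge_unique.
Qed.
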